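(* For every $n$ there exists a constant $C_n$ such that for any $t\ge0$, any $n\times n$ transition rate matrix $Q=(q_{ij})$ and any $\lambda>-\sum_{i=1}^n q_{ii}$, the entries of the matrix $e^{-\lambda t}e^{-Qt}$ are bounded in absolute value by $C_n$.
   Context: A transition rate matrix is a real matrix with non-negative off-diagonal entries and non-positive row sums (defective/killed chains allowed). *)

From HB Require Import structures.
From mathcomp Require Import all_boot all_order all_algebra.
From mathcomp Require Import all_classical all_reals all_analysis.
Set Implicit Arguments. Unset Strict Implicit. Unset Printing Implicit Defensive.
Import Order.TTheory GRing.Theory Num.Theory.
Import numFieldNormedType.Exports.
Local Open Scope ring_scope.

(* Transition rate matrix: nonnegative off-diagonal entries,
   nonpositive row sums (defective / killed chains allowed). *)
Definition rate_matrix (R : realType) (n : nat) (Q : 'M[R]_n) : Prop :=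
  (forall i j : 'I_n, i != j -> 0 <= Q i j) /\
  (forall i : 'I_n, \sum_(j < n) Q i j <= 0).

Definition expmx (R : realType) (n : nat) (A : 'M[R]_n) : 'M[R]_n :=
  \matrix_(i, j) limn (series (fun k : nat => (A ^+ k) i j / (k`!)%:R)).

From HB Require Import structures.
From mathcomp Require Import all_boot all_order all_algebra.
From mathcomp Require Import all_classical all_reals all_analysis.
From mathcomp Require Import lra.
Set Implicit Arguments. Unset Strict Implicit. Unset Printing Implicit Defensive.
Import Order.TTheory GRing.Theory Num.Theory.
Import numFieldNormedType.Exports.
Local Open Scope ring_scope.

(* In a rate matrix every entry of row l is bounded in absolute value by
   -q_ll, so the entries of (-tQ)^k are bounded by (t * -tr Q)^k and those of
   exp(-tQ) by exp(t * -tr Q); the factor exp(-lambda t) then brings the bound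
   down to 1. *)

Lemma rate_matrix_diag_le0 (R : realType) (n : nat) (Q : 'M[R]_n) (l : 'I_n) :
  rate_matrix Q -> Q l l <= 0.
Proof.
move=> [hoff hrow]; have := hrow l; rewrite (bigD1 l) //=.
have : 0 <= \sum_(m < n | m != l) Q l m.
  by apply: sumr_ge0 => m hm; apply: hoff; rewrite eq_sym.
lra.
Qed.

Lemma rate_matrix_norm_le (R : realType) (n : nat) (Q : 'M[R]_n) (l m : 'I_n) :
  rate_matrix Q -> `|Q l m| <= - Q l l.
Proof.
move=> hQ; have Qll_le0 := rate_matrix_diag_le0 l hQ.
have [<-|hlm] := eqVneq l m; first by rewrite ler0_norm.
case: hQ => hoff hrow; rewrite ger0_norm ?hoff //.
have := hrow l; rewrite (bigD1 l) //= (bigD1 m) /=; last by rewrite eq_sym.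
have : 0 <= \sum_(k < n | (k != l) && (k != m)) Q l k.
  by apply: sumr_ge0 => k /andP[hk _]; apply: hoff; rewrite eq_sym.
lra.
Qed.

Lemma norm_mx_expr_le (R : numDomainType) (n : nat) (A : 'M[R]_n)
    (d : 'I_n -> R) :
  (forall l m, `|A l m| <= d l) ->
  forall k i j, `|(A ^+ k) i j| <= (\sum_l d l) ^+ k.
Proof.
move=> hA; elim=> [|k IH] i j.
  by rewrite expr0 mxE; case: (i == j); rewrite ?normr1 ?normr0.
rewrite exprSr -mulmxE mxE exprSr.
apply: le_trans (ler_norm_sum _ _ _) _.
rewrite mulr_sumr; apply: ler_sum => l _.
rewrite normrM; apply: ler_pM => //.
Qed.

Lemma norm_expmx_le (R : realType) (n : nat) (A : 'M[R]_n) (d : 'I_n -> R) :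
  (forall l m, `|A l m| <= d l) ->
  forall i j, `|expmx A i j| <= expR (\sum_l d l).
Proof.
move=> hA i j; set s := \sum_l d l.
have s_ge0 : 0 <= s by apply: sumr_ge0 => l _; apply: le_trans (hA l l).
pose u k := (A ^+ k) i j / (k`!)%:R.
have u_le k : `|u k| <= exp_coeff s k.
  rewrite /u /exp_coeff /= normrM [`|_^-1|]ger0_norm ?invr_ge0 //.
  by apply: ler_wpM2r; [rewrite invr_ge0 | exact: norm_mx_expr_le].
have u_abs_cvg : cvgn [normed series u].
  apply: (series_le_cvg (v_ := exp_coeff s)) => //.
  - by move=> k /=.
  - by move=> k; apply: exp_coeff_ge0.
  - exact: is_cvg_series_exp_coeff.
rewrite /expmx mxE; apply: le_trans (lim_series_norm u_abs_cvg) _.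
by apply: lim_series_le => //; exact: is_cvg_series_exp_coeff.
Qed.

Theorem lemma4 (R : realType) (n : nat) :
  exists C : R, forall (t : R) (Q : 'M[R]_n) (lambda : R),
    0 <= t -> rate_matrix Q -> - (\sum_(i < n) Q i i) < lambda ->
    forall i j : 'I_n,
      `| (expR (- lambda * t) *: expmx (- (t *: Q))) i j | <= C.
Proof.
exists 1 => t Q lambda t_ge0 hQ lambda_gt i j.
have entry_le l m : `|(- (t *: Q)) l m| <= - (t * Q l l).
  by rewrite !mxE normrN normrM ger0_norm // -mulrN ler_wpM2l ?rate_matrix_norm_le.
have trace_eq : \sum_l - (t * Q l l) = t * - (\sum_(i < n) Q i i).
  by rewrite mulrN mulr_sumr sumrN.
have := norm_expmx_le entry_le i j; rewrite trace_eq => hexp.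
rewrite mxE normrM ger0_norm ?expR_ge0 //.
apply: le_trans (ler_wpM2l (expR_ge0 _) hexp) _.
rewrite -expRD expR_le1; nra.
Qed.
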